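(* Let $d\in\mathcal{S}G$. The $2$-quasi-abelian code $\mathfrak{C}_{1,d}$ over $\mathcal{S}$ is Hermitian LCD if and only if $\pi(\mathfrak{C}_{1,d})=\mathcal{C}_{1,\pi(d)}$ is a Hermitian LCD $2$-quasi-abelian code over $\mathbb{F}$.
   Context: Let $\mathcal{S}|\mathcal{R}$ be a Galois extension of degree $2$ of finite commutative chain rings, $\mathbf{m}$ the maximal ideal of $\mathcal{S}$, with residue fields $\mathcal{S}/\mathbf{m}=\mathbb{F}=\mathbb{F}_{q^2}$ and $\mathbb{F}_q$ for $\mathcal{R}$; let $\sigma$ generate $\mathrm{Aut}_{\mathcal{R}}(\mathcal{S})$ (order 2). Let $G$ be a finite abelian group of odd order $n$ with $\gcd(n,q)=1$. The Hermitian form on $(\mathcal{S}G)^2$ is $\langle(a_1,b_1),(a_2,b_2)\rangle_H=\sum_g a_{1,g}\sigma(a_{2,g})+\sum_g b_{1,g}\sigma(b_{2,g})$; on $(\mathbb{F}G)^2$ the Hermitian form is $\sum_g a_{1,g}a_{2,g}^q+\sum_g b_{1,g}b_{2,g}^q$. A $2$-quasi-abelian code over $\mathcal{S}$ (resp. $\mathbb{F}$) is an $\mathcal{S}G$- (resp. $\mathbb{F}G$-)submodule of $(\mathcal{S}G)^2$ (resp. $(\mathbb{F}G)^2$); it is Hermitian LCD if it meets its Hermitian dual only in $0$. $\mathfrak{C}_{c,d}=\{(uc,ud):u\in\mathcal{S}G\}$ and $\mathcal{C}_{a,b}=\{(sa,sb):s\in\mathbb{F}G\}$. The map $\pi:\mathcal{S}G\to\mathbb{F}G$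 reduces coefficients modulo $\mathbf{m}$, applied componentwise on $(\mathcal{S}G)^2$. *)

From HB Require Import structures.
From mathcomp Require Import all_boot all_order all_algebra all_fingroup.
Set Implicit Arguments. Unset Strict Implicit. Unset Printing Implicit Defensive.
Import GRing.Theory.
Local Open Scope ring_scope.

Definition is_ideal (R : comNzRingType) (I : pred R) : Prop :=
  [/\ 0 \in I, (forall a b, a \in I -> b \in I -> a + b \in I)
    & (forall r a, a \in I -> r * a \in I)].

Definition chain_ring (R : comNzRingType) : Prop :=
  forall I J : pred R, is_ideal I -> is_ideal J ->
    {subset I <= J} \/ {subset J <= I}.

(* S is a Galois extension of degree 2 of its fixed ring R = S^sigma with
   Galois group {id, sigma} (Chase-Harrison-Rosenberg definition). *)
Definition galois_deg2 (S : comNzRingType) (sigma : {rmorphism S -> S}) : Prop :=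
  [/\ (forall a, sigma (sigma a) = a),
      (exists a, sigma a != a)
    & exists m (x y : 'I_m -> S),
        \sum_(i < m) x i * y i = 1 /\ \sum_(i < m) x i * sigma (y i) = 0].

Definition galg (R : comNzRingType) (gT : finGroupType) := {ffun gT -> R}.

Definition gmul (R : comNzRingType) (gT : finGroupType) (u c : galg R gT)
  : galg R gT := [ffun g => \sum_(h : gT) u h * c (h^-1 * g)%g].

Definition gone (R : comNzRingType) (gT : finGroupType) : galg R gT :=
  [ffun g => (g == 1%g)%:R].

Definition gmap (R R' : comNzRingType) (gT : finGroupType) (f : R -> R')
  (u : galg R gT) : galg R' gT := [ffun g => f (u g)].

Definition qa_code (R : comNzRingType) (gT : finGroupType) (c d : galg R gT)
  (x : galg R gT * galg R gT) : Prop :=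
  exists u : galg R gT, x = (gmul u c, gmul u d).

Definition herm (R : comNzRingType) (gT : finGroupType) (inv : R -> R)
  (x y : galg R gT * galg R gT) : R :=
  \sum_(g : gT) x.1 g * inv (y.1 g) + \sum_(g : gT) x.2 g * inv (y.2 g).

Definition herm_LCD (R : comNzRingType) (gT : finGroupType) (inv : R -> R)
  (C : galg R gT * galg R gT -> Prop) : Prop :=
  forall x, C x -> (forall y, C y -> herm inv x y = 0) -> x = (0, 0).

From HB Require Import structures.
From mathcomp Require Import all_boot all_order all_algebra all_fingroup all_field.
From mathcomp Require Import ring.
Set Implicit Arguments. Unset Strict Implicit. Unset Printing Implicit Defensive.
Import GRing.Theory.
Local Open Scope ring_scope.

(* The Hermitian form on C_{1,d} = {(u, ud)} is (u, v) |-> u G v^*, where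
   G = I + D D^* and D is the matrix of multiplication by d; hence C_{1,d} is
   Hermitian LCD iff G is invertible. This holds over any finite commutative ring.
   The involution sigma induces on the residue field F = F_{q^2} a nontrivial
   involution, which must be the Frobenius a |-> a^q; so reduction modulo m maps the
   matrix G of d over S to that of pi(d) over F, and over the local ring S a matrix
   is invertible iff its determinant is a unit iff its reduction is invertible. *)

Section GroupAlgebra.
Variables (R : comNzRingType) (gT : finGroupType).

Lemma gmulr1 (u : galg R gT) : gmul u (gone R gT) = u.
Proof.
apply/ffunP => g; rewrite ffunE (bigD1 g) //= ffunE mulVg eqxx mulr1 big1 ?addr0 //.
move=> h /negbTE h_neq_g; rewrite ffunE.
by rewrite -(inj_eq (mulgI h)) mulgA mulgV mul1g mulg1 eq_sym h_neq_g mulr0.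
Qed.

Lemma gmul0r (c : galg R gT) : gmul 0 c = 0.
Proof. by apply/ffunP => g; rewrite !ffunE big1 // => h _; rewrite ffunE mul0r. Qed.

Variable inv : R -> R.
Hypotheses (inv_nmod : nmod_morphism inv) (inv_monoid : monoid_morphism inv).

Definition gram (d : galg R gT) (k h : gT) : R :=
  (k == h)%:R + \sum_(g : gT) d (k^-1 * g)%g * inv (d (h^-1 * g)%g).

Let inv_sum (I : finType) (f : I -> R) : inv (\sum_i f i) = \sum_i inv (f i).
Proof. by apply: big_morph; [exact: inv_nmod.2 | exact: inv_nmod.1]. Qed.

Let sum_mul_gram (d u : galg R gT) h :
  \sum_k u k * gram d k h =
  u h + \sum_k u k * \sum_g d (k^-1 * g)%g * inv (d (h^-1 * g)%g).
Proof.
rewrite /gram; under eq_bigr do rewrite mulrDr.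
rewrite big_split /=; congr (_ + _).
by rewrite (bigD1 h) //= eqxx mulr1 big1 ?addr0 // => k /negbTE ->; rewrite mulr0.
Qed.

Lemma herm_gram (d u v : galg R gT) :
  herm inv (u, gmul u d) (v, gmul v d) =
  \sum_(h : gT) inv (v h) * \sum_(k : gT) u k * gram d k h.
Proof.
rewrite /herm /=; under [RHS]eq_bigr do rewrite sum_mul_gram mulrDr.
rewrite big_split /=; congr (_ + _); first by apply: eq_bigr => g _; rewrite mulrC.
under eq_bigr => g _ do rewrite !ffunE inv_sum big_distrlr /=.
under [RHS]eq_bigr => h _ do rewrite mulr_sumr.
under [RHS]eq_bigr => h _ do under eq_bigr => k _ do rewrite mulr_sumr mulr_sumr.
rewrite exchange_big /=; under eq_bigr => k _ do rewrite exchange_big /=.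
rewrite exchange_big /=; apply: eq_bigr => h _; apply: eq_bigr => k _.
by apply: eq_bigr => g _; rewrite inv_monoid.2; ring.
Qed.

Lemma herm_LCD_gram (d : galg R gT) :
  herm_LCD inv (qa_code (gone R gT) d) <->
  (forall u : galg R gT, (forall h, \sum_k u k * gram d k h = 0) -> u = 0).
Proof.
have graph_code u : qa_code (gone R gT) d (u, gmul u d) by exists u; rewrite gmulr1.
split=> [LCD u u_gram | u_gram _ [u ->] orth].
  suff [] : (u, gmul u d) = (0, 0) by [].
  apply: LCD => // _ [v ->]; rewrite gmulr1 herm_gram.
  by apply: big1 => h _; rewrite u_gram mulr0.
rewrite gmulr1 [u]u_gram ?gmul0r // => h.
pose delta_h : galg R gT := [ffun k => (k == h)%:R].
have orth_h := orth _ (graph_code delta_h).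
rewrite gmulr1 herm_gram (bigD1 h) //= [X in _ + X]big1 ?addr0 in orth_h.
  by rewrite ffunE eqxx inv_monoid.1 mul1r in orth_h.
by move=> k /negbTE k_neq_h; rewrite ffunE k_neq_h inv_nmod.1 mul0r.
Qed.
End GroupAlgebra.

Lemma row_inj_unitmx (R : finComUnitRingType) n (A : 'M[R]_n) :
  (forall x : 'rV_n, x *m A = 0 -> x = 0) <-> A \in unitmx.
Proof.
split=> [A_inj | A_unit x xA0]; last by rewrite -(mulmxK A_unit x) xA0 mul0mx.
have mulA_inj : injective (fun x : 'rV[R]_n => x *m A).
  move=> x y /= eq_xyA; apply/eqP; rewrite -subr_eq0; apply/eqP/A_inj.
  by rewrite mulmxBl eq_xyA subrr.
pose pre i := iinv (injF_onto mulA_inj (delta_mx 0 i)).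
have preP i : pre i *m A = delta_mx 0 i by exact: (f_iinv (injF_onto mulA_inj _)).
suff /mulmx1_unit[] : (\matrix_i pre i) *m A = 1%:M by [].
by apply/row_matrixP => i; rewrite row_mul rowK preP rowE mulmx1.
Qed.

Definition gmx (R : Type) (gT : finGroupType) (N : gT -> gT -> R) : 'M[R]_#|gT| :=
  \matrix_(i, j) N (enum_val i) (enum_val j).

Lemma galg_lker0_unitmx (R : finComUnitRingType) (gT : finGroupType)
    (N : gT -> gT -> R) :
  (forall u : galg R gT, (forall h, \sum_k u k * N k h = 0) -> u = 0) <->
  gmx N \in unitmx.
Proof.
pose rowg (u : galg R gT) : 'rV_#|gT| := \row_i u (enum_val i).
pose ungr (x : 'rV[R]_#|gT|) : galg R gT := [ffun g => x 0 (enum_rank g)].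
have rowgK : cancel rowg ungr.
  by move=> u; apply/ffunP => g; rewrite ffunE mxE enum_rankK.
have ungrK : cancel ungr rowg.
  by move=> x; apply/rowP => i; rewrite !mxE ffunE enum_valK.
have rowg0 : rowg 0 = 0 by apply/rowP => i; rewrite !mxE ffunE.
have rowg_mul u h : (rowg u *m gmx N) 0 (enum_rank h) = \sum_k u k * N k h.
  rewrite mxE (big_enum_val (fun k => u k * N k h)).
  by apply: eq_bigr => i _; rewrite !mxE enum_rankK.
rewrite -row_inj_unitmx; split=> [ker0 x xN0 | inj u uN0].
  rewrite -[x]ungrK (ker0 (ungr x)) ?rowg0 // => h.
  by rewrite -rowg_mul ungrK xN0 mxE.
apply: (can_inj rowgK); rewrite rowg0; apply: inj.
by apply/rowP => j; rewrite -(enum_valK j) rowg_mul uN0 mxE.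
Qed.

Lemma herm_LCD_unitmx (R : finComUnitRingType) (gT : finGroupType) (inv : R -> R)
    (d : galg R gT) :
  nmod_morphism inv -> monoid_morphism inv ->
  herm_LCD inv (qa_code (gone R gT) d) <-> gmx (gram inv d) \in unitmx.
Proof.
by move=> inv_nmod inv_monoid; rewrite herm_LCD_gram // galg_lker0_unitmx.
Qed.

Section Reduction.
Variables (S F : comNzRingType) (pi : {rmorphism S -> F}) (gT : finGroupType).

Lemma gmap_gmul (u c : galg S gT) :
  gmap pi (gmul u c) = gmul (gmap pi u) (gmap pi c).
Proof.
apply/ffunP => g; rewrite !ffunE rmorph_sum; apply: eq_bigr => h _.
by rewrite rmorphM !ffunE.
Qed.

Lemma gmap_gone : gmap pi (gone S gT) = gone F gT.
Proof. by apply/ffunP => g; rewrite !ffunE rmorph_nat. Qed.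

Lemma gmap_qa_code (c d : galg S gT) : (forall y, exists a, pi a = y) ->
  forall x, (exists y, qa_code c d y /\ x = (gmap pi y.1, gmap pi y.2)) <->
            qa_code (gmap pi c) (gmap pi d) x.
Proof.
move=> pi_surj x; split=> [[_ [[u ->] ->]] | [v ->]].
  by exists (gmap pi u); rewrite /= !gmap_gmul.
have [u uP] := fin_all_exists (fun g => pi_surj (v g)).
pose u' : galg S gT := [ffun g => u g].
have pi_u' : gmap pi u' = v by apply/ffunP => g; rewrite !ffunE uP.
by exists (gmul u' c, gmul u' d); split; [exists u' | rewrite /= !gmap_gmul pi_u'].
Qed.

Lemma gram_gmap (invS : S -> S) (invF : F -> F) (d : galg S gT) :
  (forall a, pi (invS a) = invF (pi a)) ->
  gmx (gram invF (gmap pi d)) = map_mx pi (gmx (gram invS d)).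
Proof.
move=> pi_inv; apply/matrixP => i j; rewrite !mxE rmorphD rmorph_nat rmorph_sum.
by congr (_ + _); apply: eq_bigr => g _; rewrite rmorphM pi_inv !ffunE.
Qed.

End Reduction.

Lemma map_unitmx_local (S : comUnitRingType) (F : fieldType) (pi : {rmorphism S -> F})
    n (A : 'M_n) :
  (forall a, pi a = 0 <-> a \isn't a GRing.unit) ->
  (map_mx pi A \in unitmx) = (A \in unitmx).
Proof.
move=> pi_eq0; rewrite !unitmxE det_map_mx unitfE.
apply/idP/idP => [pi_det_neq0 | det_unit].
  by apply: contraLR pi_det_neq0 => /pi_eq0 ->; rewrite eqxx.
by apply/eqP => /pi_eq0; rewrite det_unit.
Qed.

Lemma expf_card_mulr_closed (F : finFieldType) (E : {set F}) :
  0 \notin E -> {in E &, forall x y, x * y \in E} -> {in E, forall z, z ^+ #|E| = 1}.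
Proof.
move=> E0 mulE z zE.
have nz x : x \in E -> x != 0 by move=> xE; apply: contraNneq E0 => <-.
have zE_eq : [set z * x | x in E] = E.
  apply/eqP; rewrite eqEcard card_in_imset; last first.
    by move=> x y _ _; apply: mulfI; apply: nz.
  by rewrite leqnn andbT; apply/subsetP => _ /imsetP[x xE ->]; apply: mulE.
have P0 : \prod_(x in E) x != 0 by apply/prodf_neq0 => x; apply: nz.
have := congr1 (fun A : {set F} => \prod_(x in A) x) zE_eq.
rewrite /= big_imset /=; last by move=> x y _ _; apply: mulfI; apply: nz.
by rewrite big_split /= prodr_const -{2}[\prod_(x in E) x]mul1r => /(mulIf P0).
Qed.

Lemma pchar_nat_sqrt_card (F : finFieldType) (q : nat) :
  #|F| = (q ^ 2)%N -> [pchar F].-nat q.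
Proof.
move=> cardF; have [p p_pr pcharFp] := finPcharP F.
have : [pchar F].-nat #|F|.
  by rewrite (card_pprimeChar pcharFp) pnatX (pnatE _ p_pr) pcharFp.
by rewrite cardF pnatX orbF.
Qed.

Lemma exprDn_card_sqrt (F : finFieldType) (q : nat) (x y : F) :
  #|F| = (q ^ 2)%N -> (x + y) ^+ q = x ^+ q + y ^+ q.
Proof. by move/pchar_nat_sqrt_card; apply: exprDn_pchar. Qed.

Lemma card_sqrt_gt1 (F : finFieldType) (q : nat) : #|F| = (q ^ 2)%N -> (1 < q)%N.
Proof. by have := finNzRing_gt1 F => /[swap] ->; case: q => [|[|]]. Qed.

Section FinFieldInvolution.
Variables (F : finFieldType) (q : nat) (tau : {rmorphism F -> F}).
Hypotheses (cardF : #|F| = (q ^ 2)%N) (tauK : involutive tau)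
  (tau_nontrivial : exists y, tau y != y).

Let q_gt1 : (1 < q)%N := card_sqrt_gt1 cardF.

Definition fixed_field := [set y : F | tau y == y].

Let fixedE y : (y \in fixed_field) = (tau y == y).
Proof. by rewrite inE. Qed.

Lemma card_fixed_field : #|fixed_field| = q.
Proof.
have [y0 y0_moved] := tau_nontrivial.
set e := y0 - tau y0.
have e_neq0 : e != 0 by rewrite subr_eq0 eq_sym.
pose f (ab : F * F) := ab.1 + ab.2 * y0.
have f_antifixed a b : a \in fixed_field -> b \in fixed_field ->
    f (a, b) - tau (f (a, b)) = b * e.
  by rewrite !fixedE => /eqP ta /eqP tb; rewrite /f /= rmorphD rmorphM ta tb /e; ring.
have f_inj : {in setX fixed_field fixed_field &, injective f}.
  move=> [a b] [a' b'] /setXP[/= aK bK] /setXP[/= a'K b'K] eq_f.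
  have eq_b : b = b'.
    apply: (mulIf e_neq0).
    by rewrite -(f_antifixed _ _ aK bK) -(f_antifixed _ _ a'K b'K) eq_f.
  by move: eq_f; rewrite /f /= eq_b => /addIr ->.
have f_onto : f @: setX fixed_field fixed_field = [set: F].
  apply/setP => y; rewrite inE; apply/imsetP.
  pose b := (y - tau y) / e; pose a := y - b * y0.
  have tb : tau b = b.
    by rewrite /b rmorphM fmorphV !rmorphB !tauK /e -(opprB y) -(opprB y0) invrN mulrNN.
  have be : b * e = y - tau y by rewrite divfK.
  exists (a, b); last by rewrite /f /a /= subrK.
  rewrite inE /= !fixedE tb eqxx andbT -subr_eq0.
  have -> : tau a - a = b * e - (y - tau y).
    by rewrite /a rmorphB rmorphM tb /e; ring.
  by rewrite be subrr.
have := card_in_imset f_inj; rewrite f_onto cardsT cardsX cardF mulnn.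
by move/eqP; rewrite eqn_exp2r // => /eqP.
Qed.

Lemma fixed_field_frobenius z : z \in fixed_field -> z ^+ q = z.
Proof.
move=> zK; have [->|z_neq0] := eqVneq z 0; first by rewrite expr0n gtn_eqF // ltnW.
have cardE : #|fixed_field :\ 0| = q.-1.
  by rewrite -card_fixed_field (cardsD1 0 fixed_field) fixedE rmorph0 eqxx.
have := @expf_card_mulr_closed F (fixed_field :\ 0).
rewrite setD11 cardE -(prednK (ltnW q_gt1)) exprS => -> //.
- by rewrite mulr1.
- move=> x y /setD1P[x_neq0 +] /setD1P[y_neq0 +]; rewrite !fixedE => xK yK.
  by rewrite !inE mulf_neq0 //= rmorphM (eqP xK) (eqP yK).
- by rewrite in_setD1 z_neq0.
Qed.

Lemma frobenius_fixed y : y ^+ q = y -> tau y = y.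
Proof.
move=> yq; pose roots := [set x : F | x ^+ q == x].
have sz : size ('X^q - 'X : {poly F}) = q.+1.
  by rewrite size_polyDl ?size_polyXn // size_polyN size_polyX ltnS.
have card_roots : (#|roots| <= q)%N.
  rewrite cardE -ltnS -sz; apply: max_poly_roots.
  - by rewrite -size_poly_eq0 sz.
  - by apply/allP => x; rewrite mem_enum inE rootE !hornerE => /eqP ->; rewrite subrr.
  - exact: enum_uniq.
have : fixed_field == roots.
  rewrite eqEcard card_fixed_field card_roots andbT.
  by apply/subsetP => x /fixed_field_frobenius xq; rewrite inE xq.
by move/eqP/setP/(_ y); rewrite fixedE inE yq eqxx => /eqP.
Qed.

(* [y] and [tau y] are the roots of [X^2 - s X + n] with [s, n] fixed by [tau], so the
   Frobenius [y ^+ q], which fixes [s] and [n], is one of them. *)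
Lemma involution_frobenius y : tau y = y ^+ q.
Proof.
pose s := y + tau y; pose n := y * tau y; pose w := y ^+ q.
have sK : s \in fixed_field by rewrite fixedE rmorphD tauK addrC.
have nK : n \in fixed_field by rewrite fixedE rmorphM tauK mulrC.
have root_y : y ^+ 2 + n = s * y by rewrite /s /n; ring.
have root_w : w ^+ 2 + n = s * w.
  have := congr1 (fun x => x ^+ q) root_y.
  rewrite /= exprDn_card_sqrt // exprAC [(s * y) ^+ q]exprMn.
  by rewrite (fixed_field_frobenius sK) (fixed_field_frobenius nK).
have : (w - y) * (w - tau y) = 0.
  transitivity (w ^+ 2 + n - s * w); first by rewrite /s /n; ring.
  by rewrite root_w subrr.
move/eqP; rewrite mulf_eq0 !subr_eq0 => /orP[/eqP w_y | /eqP <- //].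
by rewrite frobenius_fixed -/w w_y.
Qed.
End FinFieldInvolution.

Section ResidueInvolution.
Variables (S : finComUnitRingType) (sigma : {rmorphism S -> S})
  (F : finFieldType) (pi : {rmorphism S -> F}).
Hypotheses (pi_surj : forall y : F, exists a : S, pi a = y)
  (pi_eq0 : forall a : S, pi a = 0 <-> a \isn't a GRing.unit)
  (sigma_galois : galois_deg2 sigma).

Let sigmaK : involutive sigma. Proof. by case: sigma_galois. Qed.

Definition residue_inv (y : F) : F := pi (sigma (odflt 0 [pick a | pi a == y])).

(* Well defined because [ker pi] is the maximal ideal, which [sigma] preserves. *)
Lemma residue_invE a : residue_inv (pi a) = pi (sigma a).
Proof.
rewrite /residue_inv; case: pickP => [b /eqP pi_b | no_preimage] /=; last first.
  by have [b /eqP] := pi_surj (pi a); rewrite no_preimage.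
apply/eqP; rewrite -subr_eq0 -!rmorphB; apply/eqP/pi_eq0.
have /pi_eq0 : pi (b - a) = 0 by rewrite rmorphB pi_b subrr.
by apply: contra => /(rmorph_unit sigma); rewrite sigmaK.
Qed.

Fact residue_inv_is_zmod_morphism : zmod_morphism residue_inv.
Proof.
move=> y z; have [a <-] := pi_surj y; have [b <-] := pi_surj z.
by rewrite -rmorphB !residue_invE !rmorphB.
Qed.

Fact residue_inv_is_monoid_morphism : monoid_morphism residue_inv.
Proof.
split; first by rewrite -(rmorph1 pi) residue_invE !rmorph1.
move=> y z; have [a <-] := pi_surj y; have [b <-] := pi_surj z.
by rewrite -rmorphM !residue_invE !rmorphM.
Qed.

HB.instance Definition _ :=
  GRing.isZmodMorphism.Build F F residue_inv residue_inv_is_zmod_morphism.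
HB.instance Definition _ :=
  GRing.isMonoidMorphism.Build F F residue_inv residue_inv_is_monoid_morphism.

Lemma residue_invK : involutive residue_inv.
Proof. by move=> y; have [a <-] := pi_surj y; rewrite !residue_invE sigmaK. Qed.

(* If [sigma] induced the identity on [F], applying [pi] to the Galois identities
   [\sum_i x_i y_i = 1] and [\sum_i x_i sigma y_i = 0] would give [1 = 0]. *)
Lemma residue_inv_nontrivial : exists y, residue_inv y != y.
Proof.
have [_ _ [m [x [y [sum_xy sum_xsy]]]]] := sigma_galois.
apply/existsP; apply: contraT; rewrite negb_exists => /forallP /= fixed.
have pi_sigma a : pi (sigma a) = pi a by rewrite -residue_invE; apply/eqP/negPn.
have := congr1 pi sum_xsy; rewrite rmorph_sum rmorph0.
under eq_bigr => i _ do rewrite rmorphM pi_sigma -rmorphM.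
by rewrite -rmorph_sum sum_xy rmorph1 => /eqP; rewrite oner_eq0.
Qed.

Lemma pi_sigma_frobenius q a : #|F| = (q ^ 2)%N -> pi (sigma a) = pi a ^+ q.
Proof.
move=> cardF; rewrite -residue_invE.
exact: (involution_frobenius cardF residue_invK residue_inv_nontrivial).
Qed.

End ResidueInvolution.

Theorem theorem4p2
  (S : finComUnitRingType) (sigma : {rmorphism S -> S})
  (F : finFieldType) (pi : {rmorphism S -> F}) (q : nat)
  (gT : finGroupType) (d : galg S gT) :
  chain_ring S ->
  galois_deg2 sigma ->
  (forall y : F, exists a : S, pi a = y) ->
  (forall a : S, pi a = 0 <-> a \isn't a GRing.unit) ->
  #|F| = (q ^ 2)%N ->
  abelian [set: gT] -> odd #|gT| -> coprime #|gT| q ->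
  (forall x, (exists y, qa_code (gone S gT) d y /\ x = (gmap pi y.1, gmap pi y.2))
             <-> qa_code (gone F gT) (gmap pi d) x)
  /\
  (herm_LCD sigma (qa_code (gone S gT) d)
   <-> herm_LCD (fun a : F => a ^+ q) (qa_code (gone F gT) (gmap pi d))).
Proof.
move=> _ sigma_galois pi_surj pi_eq0 cardF _ _ _; split.
  by move=> x; rewrite -(gmap_gone pi); apply: gmap_qa_code.
have frob_nmod : nmod_morphism (fun a : F => a ^+ q).
  split=> [|x y]; last exact: exprDn_card_sqrt.
  by rewrite expr0n gtn_eqF // ltnW // (card_sqrt_gt1 cardF).
have frob_monoid : monoid_morphism (fun a : F => a ^+ q).
  by split=> [|x y]; [exact: expr1n | exact: exprMn].
rewrite herm_LCD_unitmx; last 2 first.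
- exact: (rmorph0 sigma, rmorphD sigma).
- exact: (rmorph1 sigma, rmorphM sigma).
rewrite herm_LCD_unitmx // (gram_gmap (invS := sigma)) ?map_unitmx_local //.
by move=> a; apply: pi_sigma_frobenius.
Qed.
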